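(* Let $n\ge 2$ and let $\mathcal{A}=\langle Q,\Sigma,\delta\rangle$ be an $n$-state DFA that has a letter of rank $n-1$ and such that the group $P$ generated by the permutation letters of $\Sigma$ acts $2$-transitively on $Q$. Then $\mathcal{A}$ is synchronizing and its reset threshold is at most $2n^2-6n+5$.
   Context: Words act on states letter by letter from left to right. A letter $x$ has rank $n-1$ if $|Q\cdot x|=n-1$; a permutation letter is one acting bijectively on $Q$. A permutation group $P$ on $Q$ is 2-transitive if it acts transitively on ordered pairs of distinct elements of $Q$. The reset threshold is the minimum length of a word $w$ with $|Q\cdot w|=1$. *)

From mathcomp Require Import all_boot all_fingroup.
Set Implicit Arguments. Unset Strict Implicit. Unset Printing Implicit Defensive.

Definition act_word (Q S : finType) (delta : Q -> S -> Q) (q : Q) (w : seq S) : Q :=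
  foldl delta q w.

Definition image_word (Q S : finType) (delta : Q -> S -> Q) (w : seq S) : {set Q} :=
  [set act_word delta q w | q in Q].

Definition letter_rank (Q S : finType) (delta : Q -> S -> Q) (a : S) : nat :=
  #|[set delta q a | q in Q]|.

Definition perm_letters (Q S : finType) (delta : Q -> S -> Q) : {set {perm Q}} :=
  [set p : {perm Q} | [exists a : S, [forall q : Q, p q == delta q a]]].

Definition perm_group (Q S : finType) (delta : Q -> S -> Q) : {set {perm Q}} :=
  (<<perm_letters delta>>)%g.

Definition two_transitive (Q : finType) (P : {set {perm Q}}) : Prop :=
  forall x y x' y' : Q, x != y -> x' != y' ->
    exists2 g, g \in P & g x = x' /\ g y = y'.

Definition synchronizing (Q S : finType) (delta : Q -> S -> Q) : Prop :=
  exists w : seq S, #|image_word delta w| = 1.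

From mathcomp Require Import all_boot all_fingroup zify.
Set Implicit Arguments. Unset Strict Implicit. Unset Printing Implicit Defensive.

(* Extension method.  A rank n-1 letter a merges two states p, p' into
   x = p.a and misses exactly one state r.  If a word w collapses a proper
   subset Y to one state, then a.u.w collapses the strictly larger set of
   states sent into Y by a.u, as soon as u is a product of permutation
   letters taking x into Y and r out of Y.  Such a u of length at most 2n-3
   exists: 2-transitivity forces the refinement of the equivalence "same
   membership in Y along all permutation words of length <= k" to become
   discrete by k = n-2; taking y with a maximal trace, reached from x by a
   permutation word v of length <= n-1, some permutation word of length
   <= n-2 separates y from r.v.  Starting from {p, p'} collapsed by a, n-2
   extensions yield a reset word of length 1 + (n-2)(2n-2) = 2n^2-6n+5. *)

Lemma holds_by_strict_growth (P : pred nat) (f : nat -> nat) (N c : nat) :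
  (forall k, P k -> P k.+1) -> (forall k, P k || (f k < f k.+1)) ->
  (forall k, ~~ P k -> f k < N) -> c <= f 0 -> P (N - c).
Proof.
move=> P_succ grow f_lt f0.
have inv k : P k || (c + k <= f k).
  elim: k => [|k]; first by rewrite addn0 f0 orbT.
  case/orP=> [Pk | ck]; first by rewrite P_succ.
  have /orP[Pk | fk] := grow k; first by rewrite P_succ.
  by rewrite addnS (leq_ltn_trans ck fk) orbT.
apply: contraT => notP; have := f_lt _ notP.
by have := inv (N - c); rewrite (negbTE notP) /=; lia.
Qed.

Lemma card_imset_lt_coarser (T U : finType) (f g : T -> U) x y :
  (forall u v, f u = f v -> g u = g v) -> g x = g y -> f x != f y ->
  #|[set g z | z in T]| < #|[set f z | z in T]|.
Proof.
move=> fg gxy fxy.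
pose h u := if [pick z | f z == u] is Some z then g z else g x.
have hf z : h (f z) = g z.
  by rewrite /h; case: pickP => [z' /eqP /fg // | /(_ z)]; rewrite eqxx.
have -> : [set g z | z in T] = [set h u | u in [set f z | z in T]].
  by rewrite -imset_comp; apply: eq_imset => z /=; rewrite hf.
rewrite ltn_neqAle leq_imset_card andbT; apply: contra fxy => /imset_injP h_inj.
by apply/eqP/h_inj; rewrite ?imset_f ?hf.
Qed.

Lemma two_transitive_rel (T : finType) (G : {set {perm T}}) (R : rel T) x y :
  two_transitive G -> (forall g u v, g \in G -> R u v -> R (g u) (g v)) ->
  x != y -> R x y -> forall u v, u != v -> R u v.
Proof.
move=> G2 R_inv xy Rxy u v uv.
by have [g Gg [<- <-]] := G2 x y u v xy uv; apply: R_inv.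
Qed.

Lemma card_lt_preimset (T : finType) (f : T -> T) (Z : {set T}) p p' :
  Z \subset [set f q | q in T] -> p != p' -> f p = f p' -> f p \in Z ->
  #|Z| < #|f @^-1: Z|.
Proof.
move=> Z_im pp' fpp' fpZ.
have imZ : f @: (f @^-1: Z) = Z.
  apply/eqP; rewrite eqEsubset; apply/andP; split.
    by apply/subsetP => y /imsetP[q]; rewrite inE => qZ ->.
  apply/subsetP => z zZ; have /imsetP[q _ zq] := subsetP Z_im z zZ.
  by apply/imsetP; exists q; rewrite // inE -zq.
rewrite -{1}imZ ltn_neqAle leq_imset_card andbT; apply/negP => /imset_injP f_inj.
by move/eqP: pp'; apply; apply: f_inj; rewrite // inE -?fpp'.
Qed.

Section PermutationWords.
Variables (Q S : finType) (delta : Q -> S -> Q).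

Definition perm_letter (s : S) : bool := injectiveb (delta^~ s).
Definition perm_word (w : seq S) : bool := all perm_letter w.

Definition preimage_word (w : seq S) (A : {set Q}) : {set Q} :=
  [set q | act_word delta q w \in A].

Lemma in_preimage_word w A q : (q \in preimage_word w A) = (act_word delta q w \in A).
Proof. by rewrite inE. Qed.

Lemma act_word_cat q w1 w2 :
  act_word delta q (w1 ++ w2) = act_word delta (act_word delta q w1) w2.
Proof. exact: foldl_cat. Qed.

Lemma act_word_inj w : perm_word w -> injective (act_word delta ^~ w).
Proof.
elim: w => [_ //|s w IH] /= /andP[/injectiveP inj_s /IH inj_w] x y.
by move/inj_w/inj_s.
Qed.

Lemma perm_word_cat w1 w2 : perm_word (w1 ++ w2) = perm_word w1 && perm_word w2.
Proof. exact: all_cat. Qed.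

Lemma preimage_word_cat w1 w2 A :
  preimage_word (w1 ++ w2) A = preimage_word w1 (preimage_word w2 A).
Proof. by apply/setP => q; rewrite !inE act_word_cat. Qed.

Lemma perm_group_ind (ok : pred {perm Q}) :
  ok 1%g -> (forall g h, ok g -> ok h -> ok (g * h)%g) ->
  (forall s (g : {perm Q}), perm_letter s -> (forall q, g q = delta q s) -> ok g) ->
  {subset perm_group delta <= ok}.
Proof.
move=> ok1 okM ok_letter.
have ok_group : group_set [set g | ok g].
  by apply/group_setP; split=> [|g h]; rewrite !inE //; apply: okM.
have /subsetP sub : perm_group delta \subset Group ok_group.
  rewrite /perm_group gen_subG; apply/subsetP => g /[!inE] /existsP[s /forallP gs].
  have gE q : g q = delta q s by apply/eqP.
  apply: (ok_letter _ _ _ gE); apply/injectiveP => x y; rewrite -!gE; exact: perm_inj.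
by move=> g /sub; rewrite inE.
Qed.

Lemma synchronizing_by_growth m w0 s0 :
  (forall Y : {set Q}, Y != set0 -> Y != setT ->
     exists2 v, size v <= m & #|Y| < #|preimage_word v Y|) ->
  0 < #|preimage_word w0 [set s0]| ->
  exists2 w, size w <= size w0 + (#|Q| - #|preimage_word w0 [set s0]|) * m
           & #|image_word delta w| = 1.
Proof.
move=> grow; have [j] := ubnP (#|Q| - #|preimage_word w0 [set s0]|).
elim: j w0 => // j IH w0 lt_j nonempty.
have [full | proper] := eqVneq (preimage_word w0 [set s0]) setT.
  exists w0; first exact: leq_addr.
  suff -> : image_word delta w0 = [set s0] by rewrite cards1.
  have in_pre q : act_word delta q w0 = s0.
    by apply/set1P; have := in_setT q; rewrite -full in_preimage_word inE.
  have [q0 _] := card_gt0P nonempty.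
  apply/setP => t; rewrite inE; apply/imsetP/eqP => [[q _ ->] | ->] //.
  by exists q0.
have [|v size_v lt_v] := grow _ _ proper; first by rewrite -card_gt0.
have lt_Q : #|preimage_word w0 [set s0]| < #|Q|.
  by rewrite -cardsT proper_card // properT.
rewrite -preimage_word_cat in lt_v.
have [w size_w sync_w] := IH (v ++ w0) ltac:(lia) (leq_ltn_trans (leq0n _) lt_v).
exists w => //; apply: (leq_trans size_w); rewrite size_cat; nia.
Qed.

Section Reachability.
Variable x0 : Q.

Definition reach (k : nat) : {set Q} :=
  iter k (fun B => B :|: \bigcup_(s | perm_letter s) [set delta q s | q in B]) [set x0].

Lemma reach_word k y : y \in reach k ->
  exists2 w, perm_word w && (size w <= k) & act_word delta x0 w = y.
Proof.
elim: k y => [|k IH] y /=; first by move/set1P->; exists [::].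
case/setUP => [/IH[w /andP[pw sw] <-] | /bigcupP[s ps /imsetP[q /IH[w]]]].
  by exists w => //; rewrite pw (leqW sw).
case/andP=> pw sw <- ->.
exists (w ++ [:: s]); last by rewrite act_word_cat.
by rewrite perm_word_cat pw /= ps size_cat addn1 ltnS sw.
Qed.

Lemma reach_subS k : reach k \subset reach k.+1.
Proof. exact: subsetUl. Qed.

Lemma reach_full : two_transitive (perm_group delta) -> reach #|Q|.-1 = setT.
Proof.
move=> P2; apply/eqP; rewrite -subn1.
apply: (@holds_by_strict_growth (fun k => reach k == setT) (fun k => #|reach k|)).
- by move=> k /eqP full; rewrite eqEsubset subsetT -full reach_subS.
- move=> k /=; have [_ | le_card] := ltnP #|reach k| #|reach k.+1|; rewrite ?orbT // orbF.
  have /eqP stable : reach k == reach k.+1 by rewrite eqEcard reach_subS.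
  have inv : {subset perm_group delta <= [pred g : {perm Q} |
      [forall q, (q \in reach k) ==> (g q \in reach k)]]}.
    apply: perm_group_ind => [|g h /forallP Hg /forallP Hh|s g ps gE];
      apply/forallP => q; rewrite ?perm1 ?permM ?gE ?implybb //; apply/implyP.
      by move=> /(implyP (Hg q)) /(implyP (Hh (g q))).
    move=> qB; rewrite stable; apply/setUP; right.
    by apply/bigcupP; exists s; rewrite ?imset_f.
  have x0_reach j : x0 \in reach j by elim: j => [|j IHj]; rewrite /= ?inE ?eqxx ?IHj.
  rewrite eqEsubset subsetT; apply/subsetP => y _.
  have [<- // | x0y] := eqVneq x0 y.
  have [g Pg [gx0 _]] := P2 x0 y y x0 x0y ltac:(by rewrite eq_sym).
  by rewrite -gx0; apply: (implyP (forallP (inv g Pg) x0)).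
- by move=> k; rewrite -properT => /proper_card; rewrite cardsT.
- by rewrite cards1.
Qed.

End Reachability.

Section Traces.
Variable X : {set Q}.

(* [trace_le k y z]: every permutation word of length at most [k] that takes
   [y] into [X] also takes [z] into [X]. *)
Fixpoint trace_le (k : nat) (y z : Q) : bool :=
  if k is k'.+1 then
    trace_le k' y z && [forall s, perm_letter s ==> trace_le k' (delta y s) (delta z s)]
  else (y \in X) ==> (z \in X).

Definition trace_eq (k : nat) (y z : Q) : bool := trace_le k y z && trace_le k z y.

Lemma trace_le_refl k : reflexive (trace_le k).
Proof.
elim: k => [|k IH] y /=; first exact: implybb.
by rewrite IH; apply/forallP => s; rewrite IH implybT.
Qed.

Lemma trace_le_trans k : transitive (trace_le k).
Proof.
elim: k => [|k IH] y x z /=.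
  by move=> /implyP xy /implyP yz; apply/implyP => /xy /yz.
case/andP=> xy /forallP xy_s /andP[yz /forallP yz_s].
rewrite (IH _ _ _ xy yz); apply/forallP => s; apply/implyP => ps.
exact: IH (implyP (xy_s s) ps) (implyP (yz_s s) ps).
Qed.

Lemma trace_le_pred k y z : trace_le k.+1 y z -> trace_le k y z.
Proof. by case/andP. Qed.

Lemma trace_le_letter k s y z :
  trace_le k.+1 y z -> perm_letter s -> trace_le k (delta y s) (delta z s).
Proof. by case/andP=> _ /forallP/(_ s)/implyP. Qed.

Lemma trace_le_mem k y z : trace_le k y z -> y \in X -> z \in X.
Proof. by elim: k => [|k IH] /=; [move/implyP | case/andP=> /IH]. Qed.

Lemma trace_lePn k y z : ~~ trace_le k y z ->
  exists u, [/\ perm_word u, size u <= k,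
                act_word delta y u \in X & act_word delta z u \notin X].
Proof.
elim: k y z => [|k IH] y z /=; first by rewrite negb_imply => /andP[yX zX]; exists [::].
rewrite negb_and => /orP[/IH[u [pu su yu zu]] | /forallPn[s]].
  by exists u; split; rewrite // (leqW su).
rewrite negb_imply => /andP[ps /IH[u [pu su yu zu]]].
by exists (s :: u); split; rewrite /= ?ps.
Qed.

Lemma trace_eq_refl k : reflexive (trace_eq k).
Proof. by move=> y; rewrite /trace_eq trace_le_refl. Qed.

Lemma trace_eq_sym k : symmetric (trace_eq k).
Proof. by move=> y z; rewrite /trace_eq andbC. Qed.

Lemma trace_eq_trans k : transitive (trace_eq k).
Proof.
move=> y x z /andP[xy yx] /andP[yz zy].
by rewrite /trace_eq (trace_le_trans xy yz) (trace_le_trans zy yx).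
Qed.

Lemma trace_eq_pred k y z : trace_eq k.+1 y z -> trace_eq k y z.
Proof. by case/andP=> /trace_le_pred yz /trace_le_pred zy; apply/andP. Qed.

Definition trace_class (k : nat) (x : Q) : {set Q} := [set y | trace_eq k x y].

Lemma eq_trace_class k x y : (trace_class k x == trace_class k y) = trace_eq k x y.
Proof.
apply/eqP/idP => [cl_xy | xy].
  by have := trace_eq_refl k y; rewrite -[_ y y]inE -/(trace_class k y) -cl_xy inE.
apply/setP => z; rewrite !inE; apply/idP/idP; last exact: trace_eq_trans.
by apply: trace_eq_trans; rewrite trace_eq_sym.
Qed.

Variables y0 z0 : Q.
Hypotheses (y0X : y0 \in X) (z0X : z0 \notin X).
Hypothesis P2 : two_transitive (perm_group delta).

Lemma trace_eq_stable_eq k :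
  (forall x y, trace_eq k.+1 x y = trace_eq k x y) -> forall x y, trace_eq k x y -> x = y.
Proof.
move=> stable x y xy; apply/eqP/negP => /negP neq_xy.
have inv_group : {subset perm_group delta <= [pred g : {perm Q} |
    [forall u, forall v, trace_eq k u v ==> trace_eq k (g u) (g v)]]}.
  apply: perm_group_ind => [|g h /forallP Hg /forallP Hh|s g ps gE];
    apply/forallP => u; apply/forallP => v.
  - by rewrite !perm1 implybb.
  - rewrite !permM; apply/implyP => /(implyP (forallP (Hg u) v)).
    exact: (implyP (forallP (Hh _) _)).
  - by apply/implyP; rewrite !gE -stable => /andP[uv vu]; rewrite /trace_eq !trace_le_letter.
have inv g u v : g \in perm_group delta -> trace_eq k u v -> trace_eq k (g u) (g v).
  by move=> /inv_group /forallP/(_ u)/forallP/(_ v)/implyP.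
have y0z0 : y0 != z0 by apply: contraNneq z0X => <-.
have := two_transitive_rel P2 inv neq_xy xy y0z0.
by case/andP => /trace_le_mem /(_ y0X); rewrite (negbTE z0X).
Qed.

Lemma trace_eq_discrete x y : trace_eq (#|Q| - 2) x y -> x = y.
Proof.
pose n_classes k := #|[set trace_class k x | x in Q]|.
pose discrete k := [forall u, forall v, trace_eq k u v ==> (u == v)].
suff /forallP/(_ x)/forallP/(_ y)/implyP xy : discrete (#|Q| - 2) by move/xy/eqP.
apply: (@holds_by_strict_growth discrete n_classes).
- move=> k /forallP disc_k; apply/forallP => u; apply/forallP => v.
  by apply/implyP => /trace_eq_pred; apply/implyP/(forallP (disc_k u)).
- move=> k.
  have [stable | ] := boolP [forall u, forall v, trace_eq k.+1 u v == trace_eq k u v].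
    apply/orP; left; apply/forallP => u; apply/forallP => v; apply/implyP => uv.
    apply/eqP/(trace_eq_stable_eq _ uv) => u' v'.
    exact/eqP/(forallP (forallP stable u')).
  case/forallPn => u /forallPn[v neq_uv]; apply/orP; right.
  have uv : trace_eq k u v.
    apply: contraNT neq_uv => not_uv; apply/eqP.
    by rewrite (negbTE not_uv); apply: contraNF not_uv; apply: trace_eq_pred.
  apply: (@card_imset_lt_coarser _ _ (trace_class k.+1) (trace_class k) u v).
  - move=> u' v' /eqP; rewrite eq_trace_class => /trace_eq_pred.
    by rewrite -eq_trace_class => /eqP.
  - by apply/eqP; rewrite eq_trace_class.
  - by rewrite eq_trace_class; apply: contra neq_uv => ->; rewrite uv.
- move=> k /forallPn[u /forallPn[v]]; rewrite negb_imply => /andP[uv neq_uv].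
  rewrite /n_classes ltn_neqAle leq_imset_card andbT; apply: contra neq_uv => /imset_injP inj.
  by apply/eqP/inj => //; apply/eqP; rewrite eq_trace_class.
- have neq_cl : trace_class 0 y0 != trace_class 0 z0.
    by rewrite eq_trace_class /trace_eq /= y0X (negbTE z0X).
  have <- : #|[set trace_class 0 y0; trace_class 0 z0]| = 2 by rewrite cards2 neq_cl.
  apply/subset_leq_card/subsetP => C.
  by rewrite !inE => /orP[] /eqP ->; rewrite imset_f.
Qed.

Lemma separating_perm_word x r : x != r ->
  exists u, [/\ perm_word u, size u <= 2 * #|Q| - 3,
                act_word delta x u \in X & act_word delta r u \notin X].
Proof.
move=> xr; pose k := #|Q| - 2; pose up y := [set z | trace_le k y z].
(* [y] is maximal for [trace_le k], which is antisymmetric by [trace_eq_discrete]. *)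
have [y _ min_y] := @arg_minnP Q x predT (fun y => #|up y|) isT.
have /reach_word[w /andP[pw sw] xw] : y \in reach x #|Q|.-1 by rewrite reach_full.
pose z := act_word delta r w.
have yz : y != z by rewrite -xw; apply: contra xr => /eqP/(act_word_inj pw)->.
have [|v [pv sv yv zv]] := @trace_lePn k y z.
  apply: contra yz => le_yz; apply/eqP/trace_eq_discrete; rewrite /trace_eq le_yz.
  have up_zy : up z \subset up y.
    by apply/subsetP => t; rewrite !inE; apply: trace_le_trans.
  have /eqP up_z : up z == up y by rewrite eqEcard up_zy min_y.
  by have := trace_le_refl k y; rewrite -[_ y y]inE -/(up y) -up_z inE.
exists (w ++ v); rewrite perm_word_cat pw pv !act_word_cat xw; split=> //.
by rewrite size_cat; lia.
Qed.

End Traces.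

Lemma corank_one_letter a : 0 < #|Q| -> letter_rank delta a = #|Q|.-1 ->
  exists r, [/\ [set delta q a | q in Q] = [set~ r]
              & exists p p', p != p' /\ delta p a = delta p' a].
Proof.
rewrite /letter_rank => Q_gt0 rank_a.
have /subsetPn[r _ r_im] : ~~ ([set: Q] \subset [set delta q a | q in Q]).
  by apply: contraTN Q_gt0 => /subset_leq_card; rewrite cardsT rank_a -subn1; lia.
exists r; split.
  apply/eqP; rewrite eqEcard cardsC1 rank_a leqnn andbT.
  by apply/subsetP => t t_im; rewrite !inE; apply: contraNneq r_im => <-.
have /injectivePn[p [p' pp' a_pp']] : ~~ injectiveb (delta^~ a).
  apply: contraTN Q_gt0 => /injectiveP inj.
  by have := card_imset Q inj; rewrite rank_a -!cardsT -subn1; lia.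
by exists p, p'.
Qed.

Lemma preimage_word_grows a Y : letter_rank delta a = #|Q|.-1 ->
  two_transitive (perm_group delta) -> Y != set0 -> Y != setT ->
  exists2 v, size v <= 2 * #|Q| - 2 & #|Y| < #|preimage_word v Y|.
Proof.
move=> rank_a P2 /set0Pn[y0 y0Y] Y_proper.
have /subsetPn[z0 _ z0Y] : ~~ ([set: Q] \subset Y) by rewrite subTset.
have Q_gt1 : 1 < #|Q|.
  by apply/card_gt1P; exists y0, z0; split=> //; apply: contraNneq z0Y => <-.
have [r [im_a [p [p' [pp' a_pp']]]]] := corank_one_letter (ltnW Q_gt1) rank_a.
have pr : delta p a != r.
  have : delta p a \in [set delta q a | q in Q] by apply: imset_f.
  by rewrite im_a !inE.
have [u [pu su pu_in ru_out]] := separating_perm_word y0Y z0Y P2 pr.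
exists (a :: u); first by move: su Q_gt1; rewrite -!cardsT /=; lia.
rewrite -[a :: u]/([:: a] ++ u) preimage_word_cat -{1}(card_preimset Y (act_word_inj pu)).
apply: (card_lt_preimset _ pp' a_pp'); last by rewrite inE.
apply/subsetP => t; rewrite in_preimage_word im_a !inE => tY.
by apply: contraNneq ru_out => <-.
Qed.

End PermutationWords.

Theorem mainTheorem8 (n : nat) (Q S : finType) (delta : Q -> S -> Q) :
  2 <= n -> #|Q| = n ->
  (exists a : S, letter_rank delta a = n.-1) ->
  two_transitive (perm_group delta) ->
  synchronizing delta /\
  (exists w : seq S, #|image_word delta w| = 1 /\ size w <= 2 * n ^ 2 + 5 - 6 * n).
Proof.
move=> n_ge2 card_Q [a rank_a] P2; rewrite -card_Q in rank_a.
have Q_gt0 : 0 < #|Q| by rewrite card_Q ltnW.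
have [r [_ [p [p' [pp' a_pp']]]]] := corank_one_letter Q_gt0 rank_a.
have two_merged : 2 <= #|preimage_word delta [:: a] [set delta p a]|.
  have <- : #|[set p; p']| = 2 by rewrite cards2 pp'.
  apply/subset_leq_card/subsetP => q; rewrite in_preimage_word !inE.
  by case/orP=> /eqP->; rewrite /act_word /= ?a_pp'.
have [w size_w sync_w] := synchronizing_by_growth
  (fun Y => preimage_word_grows rank_a P2) (ltnW two_merged).
split; first by exists w.
exists w; split=> //; apply: (leq_trans size_w); rewrite card_Q /=; nia.
Qed.
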